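(* Let $t\ge 3$ and $d\ge 0$ be integers. Every graph $G$ with $\mathrm{tww}(G)\le d$ that contains no clique on $t$ vertices admits a proper vertex coloring with at most $(d+2)^{t-2}$ colors. In particular, every class of graphs of bounded twin-width is $\chi$-bounded.
   Context: A class $\mathcal C$ of graphs is $\chi$-bounded if there is a function $f$ with $\chi(G)\le f(\omega(G))$ for all $G\in\mathcal C$, where $\chi$ is the chromatic number and $\omega$ the clique number. A trigraph $H$ consists of a vertex set $V(H)$ and two disjoint sets of unordered pairs of distinct vertices: black edges $E(H)$ and red edges $R(H)$. Two vertices are adjacent (neighbors) if they are joined by a black or a red edge. The red graph of $H$ is the graph $(V(H),R(H))$; $H$ is a $d$-trigraph if its red graph has maximum degree at most $d$. A graph is a trigraph with no red edges. Contracting two distinct vertices $u,v$ of a trigraph $H$ yields the trigraph obtained by deleting $u$ and $v$ and adding a new vertex $z$ such that, for every other vertex $x$: $zx$ is a black edge if both $ux$ and $vx$ are black edges; $zx$ is not an edge if $x$ is adjacent to neither $u$ nor $v$; and $zx$ is a red edge otherwise. All edges not incident to $u$ or $v$ are unchanged. A $d$-sequence of an $n$-vertex graph $G$ is a sequence of $d$-trigraphs $G=G_n,G_{n-1},\dots,G_1$ such that $G_1$ has a single vertex and each $G_{i-1}$ is obtained from $G_i$ by one contraction (so $G_i$ has $i$ vertices). The twin-width $\mathrm{tww}(G)$ of $G$ is the minimum $d$ such that $G$ admits a $d$-sequence. *)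

From mathcomp Require Import all_boot.
Set Warnings "-notation-overridden".
Set Implicit Arguments. Unset Strict Implicit. Unset Printing Implicit Defensive.

Definition simple_graph (V : finType) (e : rel V) : Prop :=
  symmetric e /\ irreflexive e.

(* Trigraphs whose vertices are named by elements of a finite type T.
   tv = vertex set, tb = black edges, tr = red edges (only their values on
   pairs of vertices of tv matter). *)
Record trigraph (T : finType) := Trigraph {
  tv : {set T};
  tb : rel T;
  tr : rel T }.

Definition wf_trigraph (T : finType) (H : trigraph T) : Prop :=
  forall x y, x \in tv H -> y \in tv H ->
    [/\ tb H x y = tb H y x, tr H x y = tr H y x, ~~ tb H x x, ~~ tr H x x
      & ~~ (tb H x y && tr H x y)].

Definition tadj (T : finType) (H : trigraph T) (x y : T) : bool :=
  tb H x y || tr H x y.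

Definition d_trigraph (T : finType) (d : nat) (H : trigraph T) : Prop :=
  forall x, x \in tv H -> #|[set y in tv H | tr H x y]| <= d.

Definition contraction (T : finType) (H : trigraph T) (u v : T)
  (H' : trigraph T) : Prop :=
  exists z : T,
  [/\ u \in tv H, v \in tv H, u != v,
      z \notin (tv H :\ u :\ v) & tv H' = z |: (tv H :\ u :\ v)] /\
  [/\
      (forall x y, x \in tv H :\ u :\ v -> y \in tv H :\ u :\ v ->
          tb H' x y = tb H x y /\ tr H' x y = tr H x y) &
      (forall x, x \in tv H :\ u :\ v ->
          [/\ tb H' z x = tb H u x && tb H v x,
              tb H' x z = tb H u x && tb H v x,
              tr H' z x = ~~ (tb H u x && tb H v x) && (tadj H u x || tadj H v x)
            & tr H' x z = ~~ (tb H u x && tb H v x) && (tadj H u x || tadj H v x)])].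

(* A graph seen as a trigraph without red edges; vertices are named by the
   singletons {x}, x : V (vertex names of trigraphs in a sequence live in
   {set V}). *)
Definition graph_trigraph (V : finType) (e : rel V) : trigraph {set V} :=
  Trigraph [set [set x] | x : V]
    (fun A B => [exists x, exists y, [&& A == [set x], B == [set y] & e x y]])
    (fun _ _ => false).

Definition has_d_sequence (V : finType) (e : rel V) (d : nat) : Prop :=
  exists H : nat -> trigraph {set V},
  [/\ H #|V| = graph_trigraph e,
      (forall i, 1 <= i <= #|V| ->
         [/\ wf_trigraph (H i), d_trigraph d (H i) & #|tv (H i)| = i]) &
      (forall i, 1 < i <= #|V| -> exists u v, contraction (H i) u v (H i.-1))].

Definition tww_le (V : finType) (e : rel V) (d : nat) : Prop :=
  has_d_sequence e d.

Definition is_clique (V : finType) (e : rel V) (K : {set V}) : bool :=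
  [forall x in K, forall y in K, (x != y) ==> e x y].

Definition omega (V : finType) (e : rel V) : nat :=
  \max_(K : {set V} | is_clique e K) #|K|.

Definition colorable (V : finType) (e : rel V) (k : nat) : Prop :=
  exists c : V -> 'I_k, forall x y, e x y -> c x != c y.

From mathcomp Require Import all_boot.
From mathcomp Require Import zify.
Set Implicit Arguments. Unset Strict Implicit. Unset Printing Implicit Defensive.

(* Fix a d-sequence G = H_n, ..., H_1.  A trigraph H of the sequence is related to
   G by a map [part] sending each vertex of G to the vertex of H containing it
   ([represents]: black edges of H are complete, non-edges are anticomplete).
   Given a K_{s+1}-free set S, a colouring of the vertices of H with d+2 colours is
   [separating] if every s-clique of S that is monochromatic (through [part])
   lies inside a single vertex of H.  On H_1 every colouring is separating, and a
   separating colouring of H_{i-1} lifts to H_i ([lift_separating]): keep the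
   colours, and if some s-clique of S lies inside the two contracted vertices u, v,
   give v a colour avoiding the merged vertex and its <= d red neighbours.  On
   H_n = G this yields a (d+2)-colouring of G without monochromatic s-clique in S
   ([split_clique_free]).  Each colour class is then K_s-free, so induction on the
   clique size with a product colouring gives (d+2)^(t-2) colours
   ([colorable_clique_free]), and chi-boundedness follows with the clique number. *)

Lemma cliqueP (V : finType) (e : rel V) (K : {set V}) x y :
  is_clique e K -> x \in K -> y \in K -> x != y -> e x y.
Proof.
move=> /forallP/(_ x)/implyP Kx xK yK.
by move/forallP/(_ y)/implyP: (Kx xK) => /(_ yK)/implyP.
Qed.

Lemma clique_setU1 (V : finType) (e : rel V) (C : {set V}) y :
  is_clique e C -> (forall a, a \in C -> e a y /\ e y a) -> is_clique e (y |: C).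
Proof.
move=> Ccl yC; apply/forallP => a; apply/implyP => aC; apply/forallP => b.
apply/implyP => bC; apply/implyP; move: aC bC.
rewrite !in_setU1 => /orP[/eqP-> | aC] /orP[/eqP-> | bC] ab.
- by rewrite eqxx in ab.
- by case: (yC b bC).
- by case: (yC a aC).
- exact: cliqueP Ccl aC bC ab.
Qed.

Lemma clique_le_omega (V : finType) (e : rel V) (K : {set V}) :
  is_clique e K -> #|K| <= omega e.
Proof. exact: (@leq_bigmax_cond _ (is_clique e) (fun K : {set V} => #|K|)). Qed.

Definition clique_free_on (V : finType) (e : rel V) (S : {set V}) (n : nat) : Prop :=
  forall K : {set V}, K \subset S -> is_clique e K -> #|K| = n -> False.

Definition colorable_on (V : finType) (e : rel V) (S : {set V}) (k : nat) : Prop :=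
  exists2 c : V -> nat, forall x, c x < k & {in S &, forall x y, e x y -> c x != c y}.

(* Product colouring: if each class of a k-colouring f of S is n-colourable,
   then S is (k * n)-colourable, by colouring x with the pair (f x, c_(f x) x). *)
Lemma colorable_on_classes (V : finType) (e : rel V) (S : {set V}) k n
    (f : V -> 'I_k) :
  (forall a : 'I_k, colorable_on e [set x in S | f x == a] n) ->
  colorable_on e S (k * n).
Proof.
move=> /fin_all_exists2[c c_lt c_ok].
exists (fun x => f x * n + c (f x) x) => [x | x y xS yS exy].
  by have := ltn_ord (f x); have := c_lt (f x) x; nia.
have [fxy | /eqP fxy] := eqVneq (f x) (f y).
  by rewrite fxy eqn_add2l c_ok ?inE ?xS ?yS ?fxy ?eqxx.
apply/eqP => E; apply: fxy; apply: val_inj => /=.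
by have := c_lt (f x) x; have := c_lt (f y) y; nia.
Qed.

(* The vertex part x of the trigraph H contains the vertex x of the graph e:
   black edges of H only join complete pairs of parts, and distinct
   non-adjacent parts are anticomplete.  Red edges carry no information. *)
Definition represents (V : finType) (e : rel V) (H : trigraph {set V})
    (part : V -> {set V}) : Prop :=
  [/\ forall x, part x \in tv H,
      forall x y, tb H (part x) (part y) -> e x y &
      forall x y, part x != part y -> ~~ tadj H (part x) (part y) -> ~~ e x y].

Definition separating (V : finType) (e : rel V) (S : {set V}) (s k : nat)
    (part : V -> {set V}) (col : {set V} -> 'I_k) : Prop :=
  forall K : {set V}, K \subset S -> is_clique e K -> #|K| = s ->
    {in K &, forall x y, col (part x) = col (part y)} ->
    {in K &, forall x y, part x = part y}.

Lemma tadj_sym (T : finType) (H : trigraph T) x y :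
  wf_trigraph H -> x \in tv H -> y \in tv H -> tadj H x y = tadj H y x.
Proof. by move=> wfH xH yH; case: (wfH x y xH yH) => bs rs _ _ _; rewrite /tadj bs rs. Qed.

Lemma free_colour (T : finType) k (col : T -> 'I_k) (c0 : 'I_k) (R : {set T}) :
  #|R|.+1 < k -> exists b : 'I_k, b != c0 /\ {in R, forall w, col w != b}.
Proof.
move=> Rk; set F := c0 |: col @: R.
have : 0 < #|~: F|.
  rewrite cardsCs setCK card_ord subn_gt0 (leq_ltn_trans _ Rk) //.
  by rewrite (leq_trans (leq_card_setU _ _)) // cards1 ltnS leq_imset_card.
case/card_gt0P => b; rewrite !inE negb_or => /andP[bc0 bR].
exists b; split => [|w wR]; first by [].
by apply: contraNneq bR => <-; apply: imset_f.
Qed.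

(* One contraction step: H' is obtained from H by contracting u and v into z;
   the hypotheses below are the unfolded definition of [contraction]. *)
Section Contraction.

Variables (V : finType) (H H' : trigraph {set V}) (u v z : {set V}).

Local Notation rest := (tv H :\ u :\ v).

Hypothesis wfH : wf_trigraph H.
Hypothesis wfH' : wf_trigraph H'.
Hypothesis z_fresh : z \notin rest.
Hypothesis tv_contr : tv H' = z |: rest.
Hypothesis rest_edges : forall x y, x \in rest -> y \in rest ->
  tb H' x y = tb H x y /\ tr H' x y = tr H x y.
Hypothesis z_edges : forall x, x \in rest ->
  [/\ tb H' z x = tb H u x && tb H v x,
      tb H' x z = tb H u x && tb H v x,
      tr H' z x = ~~ (tb H u x && tb H v x) && (tadj H u x || tadj H v x)
    & tr H' x z = ~~ (tb H u x && tb H v x) && (tadj H u x || tadj H v x)].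

Definition merge (A : {set V}) : {set V} := if A \in [set u; v] then z else A.

Lemma rest_of A : A \in tv H -> A \notin [set u; v] -> A \in rest.
Proof. by move=> AH; rewrite !in_setD1 in_set2 negb_or AH => /andP[-> ->]. Qed.

Lemma merge_in A : A \in tv H -> merge A \in tv H'.
Proof.
rewrite /merge tv_contr; case: ifPn => [_ _ | Auv AH]; first exact: setU11.
by rewrite setU1r // rest_of.
Qed.

Lemma merge_inj A B : A \in tv H -> B \in tv H -> merge A = merge B ->
  A = B \/ (A \in [set u; v]) && (B \in [set u; v]).
Proof.
rewrite /merge => AH BH; case: ifPn => Auv; case: ifPn => Buv;
  try by [right; apply/andP | left].
- by move=> zB; move: z_fresh; rewrite zB rest_of.
- by move=> Az; move: z_fresh; rewrite -Az rest_of.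
Qed.

Lemma tadj_z x : x \in rest ->
  tadj H' z x = tadj H u x || tadj H v x /\ tadj H' x z = tadj H u x || tadj H v x.
Proof.
move=> xr; case: (z_edges xr) => bz bz' rz rz'.
rewrite /tadj bz bz' rz rz' /tadj.
by case: (tb H u x); case: (tb H v x); case: (tr H u x); case: (tr H v x).
Qed.

Lemma merge_black A B : A \in tv H -> B \in tv H ->
  tb H' (merge A) (merge B) -> tb H A B.
Proof.
have zH' : z \in tv H' by rewrite tv_contr setU11.
rewrite /merge => AH BH; case: ifPn => Auv; case: ifPn => Buv.
- by case: (wfH' zH' zH') => _ _ /negbTE->.
- case: (z_edges (rest_of BH Buv)) => -> _ _ _ /andP[uB vB].
  by move: Auv; rewrite in_set2 => /orP[]/eqP->.
- case: (z_edges (rest_of AH Auv)) => _ -> _ _ /andP[uA vA].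
  case: (wfH AH BH) => -> _ _ _ _.
  by move: Buv; rewrite in_set2 => /orP[]/eqP->.
- by case: (rest_edges (rest_of AH Auv) (rest_of BH Buv)) => ->.
Qed.

Lemma merge_nonadj A B : A \in tv H -> B \in tv H ->
  merge A != merge B -> ~~ tadj H' (merge A) (merge B) -> ~~ tadj H A B.
Proof.
rewrite /merge => AH BH; case: ifPn => Auv; case: ifPn => Buv.
- by rewrite eqxx.
- case: (tadj_z (rest_of BH Buv)) => -> _ _ /norP[uB vB].
  by move: Auv; rewrite in_set2 => /orP[]/eqP->.
- case: (tadj_z (rest_of AH Auv)) => _ -> _ /norP[uA vA].
  rewrite tadj_sym //.
  by move: Buv; rewrite in_set2 => /orP[]/eqP->.
- case: (rest_edges (rest_of AH Auv) (rest_of BH Buv)) => bAB rAB _.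
  by rewrite /tadj bAB rAB.
Qed.

Lemma represents_merge (e : rel V) (part : V -> {set V}) :
  represents e H part -> represents e H' (merge \o part).
Proof.
case=> partH black nonadj; split => [x | x y | x y neq na] /=.
- exact: merge_in.
- by move/merge_black => /(_ (partH x) (partH y)); apply: black.
- apply: nonadj; last exact: merge_nonadj.
  by apply: contra_neq neq => /= ->.
Qed.

Variables (e : rel V) (d : nat) (S : {set V}) (s : nat) (part : V -> {set V}).

Hypothesis esym : symmetric e.
Hypothesis red_deg : d_trigraph d H'.
Hypothesis no_big : clique_free_on e S s.+1.
Hypothesis rep : represents e H part.

Definition uv_clique (C : {set V}) : bool :=
  [&& C \subset S, is_clique e C, #|C| == s & part @: C \subset [set u; v]].

(* A vertex of S black-joined to both u and v would extend such a clique
   to an (s+1)-clique. *)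
Lemma uv_clique_no_common_black (C : {set V}) y :
  uv_clique C -> y \in S -> part y \notin [set u; v] ->
  ~~ (tb H u (part y) && tb H v (part y)).
Proof.
case/and4P => CS Ccl /eqP Cs Cuv yS yuv; apply/negP => /andP[uy vy].
have [_ black _] := rep.
have Cy a : a \in C -> e a y.
  move=> aC; apply: black.
  by move: (subsetP Cuv _ (imset_f part aC)); rewrite in_set2 => /orP[]/eqP->.
apply: (no_big (K := y |: C)).
- by rewrite subUset sub1set yS CS.
- by apply: clique_setU1 => // a aC; rewrite [e y a]esym; split; apply: Cy.
- rewrite cardsU1 Cs; suff -> : y \notin C by [].
  by apply: contra yuv => yC; apply: (subsetP Cuv); apply: imset_f.
Qed.

Lemma red_to_z (C : {set V}) x y :
  uv_clique C -> e x y -> part x = v -> y \in S -> part y \notin [set u; v] ->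
  tr H' z (part y).
Proof.
move=> CC exy px yS yuv; have [partH _ nonadj] := rep.
have vy : v != part y by apply: contraNneq yuv => <-; rewrite !inE eqxx orbT.
have adj : tadj H v (part y).
  by apply: contraLR exy; rewrite -px => na; apply: nonadj; rewrite // px.
case: (z_edges (rest_of (partH y) yuv)) => _ _ -> _.
by rewrite (uv_clique_no_common_black CC) //= adj orbT.
Qed.

(* If some s-clique of S lies inside u and v, recolour v with a colour avoiding
   z and its red neighbours: a monochromatic s-clique meeting v then lies in v. *)
Lemma lift_with_uv_clique (C : {set V}) (col' : {set V} -> 'I_d.+2) :
  uv_clique C -> separating e S s (merge \o part) col' ->
  exists col : {set V} -> 'I_d.+2, separating e S s part col.
Proof.
move=> CC sep'; have [partH _ _] := rep.
have zH' : z \in tv H' by rewrite tv_contr setU11.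
have [b [bz bred]] : exists b : 'I_d.+2,
    b != col' z /\ {in [set w in tv H' | tr H' z w], forall w, col' w != b}.
  by apply: free_colour; rewrite !ltnS; apply: red_deg.
exists (fun A => if A == v then b else col' (merge A)) => K KS Kcl Ks mono.
case: (boolP [exists x in K, part x == v]) =>
  [/exists_inP[x0 x0K /eqP px0] | /exists_inPn nov].
  have all_v : {in K, forall y, part y = v}.
    move=> y yK; apply/eqP/negPn/negP => yv.
    have := mono x0 y x0K yK; rewrite /= px0 eqxx (negbTE yv) /merge.
    case: ifPn => [_ | yuv]; first by apply/eqP.
    have x0y : x0 != y by apply: contra_neq yv => <-.
    have ry := red_to_z CC (cliqueP Kcl x0K yK x0y) px0 (subsetP KS y yK) yuv.
    apply/eqP; rewrite eq_sym; apply: bred.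
    by rewrite inE ry andbT; have := merge_in (partH y); rewrite /merge (negbTE yuv).
  by move=> x y xK yK; rewrite !all_v.
have mono' : {in K &, forall x y, col' (merge (part x)) = col' (merge (part y))}.
  move=> x y xK yK; have := mono x y xK yK.
  by rewrite (negbTE (nov x xK)) (negbTE (nov y yK)).
move=> x y xK yK.
have [//|/andP[xuv yuv]] :=
  merge_inj (partH x) (partH y) (sep' K KS Kcl Ks mono' x y xK yK).
move: xuv yuv (nov x xK) (nov y yK); rewrite !in_set2.
by case/orP=> /eqP->; case/orP=> /eqP->; rewrite ?eqxx.
Qed.

Lemma lift_without_uv_clique (col' : {set V} -> 'I_d.+2) :
  (forall C, ~~ uv_clique C) ->
  separating e S s (merge \o part) col' -> separating e S s part (col' \o merge).
Proof.
move=> noC sep' K KS Kcl Ks mono x y xK yK; have [partH _ _] := rep.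
have meq := sep' K KS Kcl Ks mono.
have [//|/andP[xuv _]] := merge_inj (partH x) (partH y) (meq x y xK yK).
case/negP: (noC K); rewrite /uv_clique KS Kcl Ks eqxx /=.
apply/subsetP => _ /imsetP[a aK ->].
by case: (merge_inj (partH x) (partH a) (meq x a xK aK)) => [<- | /andP[]].
Qed.

Lemma lift_separating (col' : {set V} -> 'I_d.+2) :
  separating e S s (merge \o part) col' ->
  exists col : {set V} -> 'I_d.+2, separating e S s part col.
Proof.
move=> sep'; case: (boolP [exists C, uv_clique C]) => [/existsP[C CC] | /existsPn noC].
  exact: lift_with_uv_clique CC sep'.
by exists (col' \o merge); apply: lift_without_uv_clique.
Qed.

End Contraction.

Lemma separating_along_sequence (V : finType) (e : rel V) d
    (H : nat -> trigraph {set V}) (S : {set V}) s :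
  symmetric e ->
  (forall i, 1 <= i <= #|V| ->
     [/\ wf_trigraph (H i), d_trigraph d (H i) & #|tv (H i)| = i]) ->
  (forall i, 1 < i <= #|V| -> exists u v, contraction (H i) u v (H i.-1)) ->
  clique_free_on e S s.+1 ->
  forall i, 1 <= i <= #|V| -> forall part, represents e (H i) part ->
    exists col : {set V} -> 'I_d.+2, separating e S s part col.
Proof.
move=> esym Hseq Hcontr no_big; elim=> [|[|i] IH] // Hi part rep.
  have [_ _ /eqP/cards1P[A tvA]] := Hseq 1 Hi; have [partH _ _] := rep.
  exists (fun _ => ord0) => K _ _ _ _ x y _ _.
  by move: (partH x) (partH y); rewrite tvA !inE => /eqP-> /eqP->.
have [u [v [z [[_ _ _ z_fresh tv_contr] [rest_edges z_edges]]]]] := Hcontr i.+2 Hi.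
have Hi1 : 1 <= i.+1 <= #|V| by move: Hi; lia.
have [wf1 red1 _] := Hseq _ Hi1; have [wf2 _ _] := Hseq _ Hi.
have [col' sep'] :=
  IH Hi1 _ (represents_merge wf2 wf1 tv_contr rest_edges z_edges rep).
exact: (lift_separating z_fresh tv_contr z_edges esym red1 no_big rep) sep'.
Qed.

Lemma graph_trigraph_represents (V : finType) (e : rel V) :
  represents e (graph_trigraph e) (fun x => [set x]).
Proof.
split => [x | x y | x y _] /=.
- exact: imset_f.
- by case/existsP=> x' /existsP[y' /and3P[/eqP/set1_inj-> /eqP/set1_inj->]].
- rewrite /tadj /= orbF; apply: contra => exy.
  by apply/existsP; exists x; apply/existsP; exists y; rewrite !eqxx.
Qed.

Lemma split_clique_free (V : finType) (e : rel V) d (S : {set V}) s :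
  simple_graph e -> tww_le e d -> 1 < s -> clique_free_on e S s.+1 ->
  exists f : V -> 'I_d.+2, forall a, clique_free_on e [set x in S | f x == a] s.
Proof.
move=> [esym _] [H [H_G Hseq Hcontr]] s_gt1 no_big.
have [V0 | V_gt0] := posnP #|V|.
  exists (fun _ => ord0) => a K _ _ Ks.
  by have := max_card K; rewrite V0 Ks; lia.
have HV : 1 <= #|V| <= #|V| by rewrite V_gt0 leqnn.
have rep := graph_trigraph_represents e; rewrite -H_G in rep.
have [col sep] := separating_along_sequence esym Hseq Hcontr no_big HV rep.
exists (fun x => col [set x]) => a K Ka Kcl Ks.
have mono : {in K &, forall x y, col [set x] = col [set y]}.
  move=> x y /(subsetP Ka) + /(subsetP Ka).
  by rewrite !inE => /andP[_ /eqP->] /andP[_ /eqP->].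
have KS : K \subset S.
  by apply: subset_trans Ka _; apply/subsetP => x; rewrite inE => /andP[].
have : #|K| <= 1 by apply/card_le1_eqP => x y xK yK; apply/set1_inj/(sep K).
by rewrite Ks; lia.
Qed.

Lemma colorable_on_edgeless (V : finType) (e : rel V) (S : {set V}) :
  simple_graph e -> clique_free_on e S 2 -> colorable_on e S 1.
Proof.
move=> [esym eirr] no_edge; exists (fun _ => 0) => // x y xS yS exy.
have xy : x != y by apply: contraTneq exy => ->; rewrite eirr.
case: (no_edge [set x; y]).
- by rewrite subUset !sub1set xS yS.
- apply/forallP => a; apply/implyP => aK; apply/forallP => b; apply/implyP => bK.
  move: aK bK; rewrite !in_set2 => /orP[]/eqP-> /orP[]/eqP->;
    by rewrite ?eqxx ?exy ?implybT // esym exy implybT.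
- by rewrite cards2 xy.
Qed.

Lemma colorable_clique_free (V : finType) (e : rel V) d m (S : {set V}) :
  simple_graph e -> tww_le e d -> clique_free_on e S m.+2 ->
  colorable_on e S (d.+2 ^ m).
Proof.
move=> sg tw; elim: m S => [|m IH] S no_big; first exact: colorable_on_edgeless.
have [f f_split] := split_clique_free sg tw (isT : 1 < m.+2) no_big.
by rewrite expnS; apply: (colorable_on_classes (f := f)) => a; apply: IH.
Qed.

Lemma colorable_of_colorable_on (V : finType) (e : rel V) k :
  colorable_on e [set: V] k -> colorable e k.
Proof.
by case=> c c_lt c_ok; exists (fun x => Ordinal (c_lt x)) => x y; apply: c_ok.
Qed.

Lemma clique_free_colorable (t d : nat) (V : finType) (e : rel V) :
  2 <= t -> simple_graph e -> tww_le e d ->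
  ~ (exists K : {set V}, is_clique e K /\ #|K| = t) ->
  colorable e ((d + 2) ^ (t - 2)).
Proof.
move=> t_ge2 sg tw noK; rewrite addn2; apply: colorable_of_colorable_on.
apply: colorable_clique_free sg tw _ => K _ Kcl Ks.
by apply: noK; exists K; split; rewrite // Ks; lia.
Qed.

Theorem mainTheorem10 :
  (forall (t d : nat), 3 <= t ->
     forall (V : finType) (e : rel V),
       simple_graph e -> tww_le e d ->
       ~ (exists K : {set V}, is_clique e K /\ #|K| = t) ->
       colorable e ((d + 2) ^ (t - 2)))
  /\
  (forall d : nat, exists f : nat -> nat,
     forall (V : finType) (e : rel V),
       simple_graph e -> tww_le e d -> colorable e (f (omega e))).
Proof.
split=> [t d t_ge3 V e | d]; first exact: clique_free_colorable (ltnW t_ge3).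
(* a graph with clique number w has no clique on w.-1.+2 >= w + 1 vertices *)
exists (fun w => (d + 2) ^ w.-1) => V e sg tw.
have := clique_free_colorable (t := (omega e).-1.+2) isT sg tw.
rewrite subn2; apply; case=> K [Kcl Ks].
by have := clique_le_omega Kcl; rewrite Ks; lia.
Qed.
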